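(* Let $E\subset\mathbb{Q}_p$ be a non-empty finite set and $\nu=\sum_{x\in E}\alpha_x\delta_x$ with $\alpha_x\in\mathbb{Z}\setminus\{0\}$. If $\xi\in\mathbb{Q}_p\setminus\{0\}$ satisfies $\widehat\nu(\xi)=0$, then for every $x\in E$ there exists $x'\in E$ with $x'\neq x$ and $|x-x'|_p\le p/|\xi|_p$.
   Context: $\chi(x)=e^{2\pi i\{x\}}$ with $\{x\}$ the $p$-adic fractional part of $x$; $\widehat\nu(\xi)=\sum_{x\in E}\alpha_x\overline{\chi(\xi x)}$. *)

From Stdlib Require Import Reals ClassicalEpsilon.
From HB Require Import structures.
From mathcomp Require Import all_boot all_order all_algebra.
From mathcomp Require Import Rstruct ring.
Set Implicit Arguments. Unset Strict Implicit. Unset Printing Implicit Defensive.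
Import Order.TTheory GRing.Theory Num.Theory.
Local Open Scope ring_scope.

Definition ppow (p n : nat) : int := ((p ^ n)%N)%:Z.

(* ---------- p-adic integers Z_p as coherent sequences ----------
   a = lim a_n, with a_{n+1} = a_n mod p^n, so that a - a_n \in p^n Z_p. *)
Record Zp (p : nat) := MkZp {
  zseq :> nat -> int;
  zcompat : forall n, (zseq n.+1 == zseq n %[mod ppow p n])%Z }.

Lemma zlin_compat p (c d : int) (a b : Zp p) n :
  ((c * a n.+1 + d * b n.+1) == (c * a n + d * b n) %[mod ppow p n])%Z.
Proof.
rewrite eqz_mod_dvd.
have ha := zcompat a n; have hb := zcompat b n.
rewrite eqz_mod_dvd in ha; rewrite eqz_mod_dvd in hb.
have -> : c * a n.+1 + d * b n.+1 - (c * a n + d * b n)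
        = c * (a n.+1 - a n) + d * (b n.+1 - b n) by ring.
by rewrite rpredD // dvdz_mull.
Qed.

Definition zlin p (c d : int) (a b : Zp p) : Zp p :=
  MkZp (zlin_compat c d a b).

Lemma zmul_compat p (a b : Zp p) n :
  ((a n.+1 * b n.+1) == (a n * b n) %[mod ppow p n])%Z.
Proof.
rewrite eqz_mod_dvd.
have ha := zcompat a n; have hb := zcompat b n.
rewrite eqz_mod_dvd in ha; rewrite eqz_mod_dvd in hb.
have -> : a n.+1 * b n.+1 - a n * b n
        = a n.+1 * (b n.+1 - b n) + (a n.+1 - a n) * b n by ring.
by apply: rpredD; [exact: dvdz_mull | exact: dvdz_mulr].
Qed.

Definition zmul p (a b : Zp p) : Zp p := MkZp (zmul_compat a b).

(* ---------- p-adic numbers Q_p : x = a / p^k with a in Z_p ---------- *)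
Record Qp (p : nat) := MkQp { qk : nat; qa : Zp p }.

(* equality of p-adic numbers (setoid equality on representations):
   p^{k_y} a_x = p^{k_x} a_y in Z_p *)
Definition qp_eq p (x y : Qp p) : Prop :=
  forall n, ((ppow p (qk y) * qa x n) == (ppow p (qk x) * qa y n)
             %[mod ppow p n])%Z.

Lemma zzero_compat p n : ((0 : int) == 0 %[mod ppow p n])%Z.
Proof. by []. Qed.
Definition qp0 p : Qp p := MkQp 0 (MkZp (@zzero_compat p)).

Definition qp_mul p (x y : Qp p) : Qp p :=
  MkQp (qk x + qk y) (zmul (qa x) (qa y)).

(* x - y = (p^{k_y} a_x - p^{k_x} a_y) / p^{k_x + k_y} *)
Definition qp_sub p (x y : Qp p) : Qp p :=
  MkQp (qk x + qk y) (zlin (ppow p (qk y)) (- ppow p (qk x)) (qa x) (qa y)).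

(* p-adic absolute value.  For a in Z_p, the least m with a_m <> 0 mod p^m
   is v_p(a) + 1; so |a/p^k|_p = p^k / p^(m-1); and |0|_p = 0. *)
Definition notdiv p (a : Zp p) : pred nat :=
  fun m => ~~ (ppow p m %| a m)%Z.

Definition qp_abs p (x : Qp p) : R :=
  match excluded_middle_informative (exists m, notdiv (qa x) m) with
  | left h => ((p%:R : R) ^+ qk x) / ((p%:R : R) ^+ (ex_minn h).-1)
  | right _ => 0
  end.

Definition qp_frac p (x : Qp p) : R :=
  ((qa x (qk x) %% ppow p (qk x))%Z)%:~R / ((p%:R : R) ^+ qk x).

(* complex numbers as pairs (real part, imaginary part) *)
Definition chi p (x : Qp p) : R * R :=
  (cos (2 * PI * qp_frac x), sin (2 * PI * qp_frac x)).

(* Fourier transform of nu = sum_i alpha_i delta_{x_i}: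
   hat nu(xi) = sum_i alpha_i * conj(chi(xi x_i)) *)
Definition nu_hat p (n : nat) (x : 'I_n -> Qp p) (alpha : 'I_n -> int)
  (xi : Qp p) : R * R :=
  (\sum_(i < n) (alpha i)%:~R * (chi (qp_mul xi (x i))).1,
   \sum_(i < n) (alpha i)%:~R * (- (chi (qp_mul xi (x i))).2)).

From Pilot Require Import Defs.
From Stdlib Require Import Reals Classical ClassicalEpsilon.
From mathcomp Require Import all_boot all_order all_algebra all_field.
From mathcomp Require Import Rstruct complex ring zify.
Set Implicit Arguments. Unset Strict Implicit. Unset Printing Implicit Defensive.
Import Order.TTheory GRing.Theory Num.Theory.
Local Open Scope ring_scope.

(* Choose K so large that every [xi * x] has a fractional part [e_x / p ^ K].
   Then nu_hat(xi) = 0 says that the primitive p^K-th root of unity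
   zeta = exp(2 pi i / p ^ K) is a root of P = sum_x alpha_x X^(e_x), a rational
   polynomial of degree < p ^ K.  The minimal polynomial of zeta is
   Phi = 1 + X^q + ... + X^((p-1) q) with q = p ^ K.-1, and P = Phi Q forces
   P (X^q - 1) = Q (X^(pq) - 1) with deg Q < q: the coefficients of P are
   q-periodic on [0, p ^ K).  Hence the exponent e_x reappears modulo q as the
   exponent of some x' <> x, i.e. xi x and xi x' have fractional parts congruent
   modulo 1/p, which means |xi (x - x')|_p <= p. *)

(** * Divisibility by the cyclotomic polynomial of a prime power *)

(* [geom_poly p (p ^ k)] is the cyclotomic polynomial 'Phi_(p ^ k.+1) for prime [p]. *)
Definition geom_poly (p q : nat) : {poly rat} := \sum_(j < p) 'X^(j * q).

Lemma horner_geom_poly (F : numFieldType) p q (u : F) :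
  (map_poly ratr (geom_poly p q)).[u] = \sum_(j < p) (u ^+ q) ^+ j.
Proof.
rewrite rmorph_sum horner_sum; apply: eq_bigr => j _.
by rewrite /= map_polyXn hornerXn -exprM mulnC.
Qed.

Lemma geom_poly_mul p q : geom_poly p q * ('X^q - 1) = 'X^(p * q) - 1.
Proof.
rewrite mulrC (mulnC p) exprM [RHS]subrX1; congr (_ * _).
by apply: eq_bigr => j _; rewrite -exprM mulnC.
Qed.

Lemma size_geom_poly p q : (0 < p)%N -> (0 < q)%N ->
  size (geom_poly p q) = (p.-1 * q).+1.
Proof.
move=> p0 q0; have pq0 : (0 < p * q)%N by rewrite muln_gt0 p0.
have sizeX1 n : (0 < n)%N -> size ('X^n - 1 : {poly rat}) = n.+1.
  by move=> n0; rewrite -polyC1 size_XnsubC.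
have Xq0 : 'X^q - 1 != 0 :> {poly rat} by rewrite -size_poly_eq0 sizeX1.
have G0 : geom_poly p q != 0.
  apply: contra_eq_neq (geom_poly_mul p q) => ->.
  by rewrite mul0r eq_sym -size_poly_eq0 sizeX1.
have := congr1 (fun r : {poly rat} => size r) (geom_poly_mul p q).
rewrite /= size_mul // !sizeX1 // -[in X in _ = X.+1 -> _](prednK p0) mulSn.
by move: (size _) (p.-1 * q)%N => s t; lia.
Qed.

Lemma prim_root_pfactor (R : idomainType) p K (z : R) : prime p -> (0 < K)%N ->
  z ^+ (p ^ K) = 1 -> z ^+ (p ^ K.-1) != 1 -> (p ^ K).-primitive_root z.
Proof.
move=> pp K0 zN zq.
have pK0 : (0 < p ^ K)%N by rewrite expn_gt0 prime_gt0.
have [d dprim dN] := prim_order_exists pK0 zN.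
have [m mK dm] := dvdn_pfactor d K pp dN.
have mK' : m = K.
  apply/eqP; rewrite eqn_leq mK leqNgt; apply: contra zq => mlt.
  by rewrite -(prim_order_dvd dprim) dm dvdn_exp2l // -ltnS prednK.
by rewrite -mK' -dm.
Qed.

Lemma root_geom_poly (F : numFieldType) p K (u : F) : prime p -> (0 < K)%N ->
  root (map_poly ratr (geom_poly p (p ^ K.-1))) u = (p ^ K).-primitive_root u.
Proof.
move=> pp K0; set q := (p ^ K.-1)%N.
have pK : (p ^ K = p * q)%N by rewrite /q -expnS prednK.
have uX1 : (u ^+ q) ^+ p - 1 = (u ^+ q - 1) * \sum_(j < p) (u ^+ q) ^+ j.
  exact: subrX1.
rewrite /root horner_geom_poly; apply/idP/idP => [/eqP G0|prim].
  have uq : u ^+ q != 1.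
    apply: contra_eq_neq G0 => ->; under eq_bigr do rewrite expr1n.
    by rewrite sumr_const card_ord pnatr_eq0 -lt0n prime_gt0.
  apply: prim_root_pfactor => //.
  by apply/eqP; rewrite pK mulnC exprM -subr_eq0 uX1 G0 mulr0.
have uq : u ^+ q != 1.
  rewrite -(prim_order_dvd prim) /q dvdn_Pexp2l ?prime_gt1 //.
  by rewrite -ltnNge ltn_predL.
have := prim_expr_order prim; rewrite pK mulnC exprM => /eqP.
by rewrite -subr_eq0 uX1 mulf_eq0 subr_eq0 (negbTE uq).
Qed.

(* Irreducibility of 'Phi_(p ^ K) is only available over algC: pass through a
   complex root of gcd(P, G), whose minimal polynomial already has the size of G. *)
Lemma prim_root_geom_poly_dvd (F : numFieldType) p K (z : F) (P : {poly rat}) :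
  prime p -> (0 < K)%N -> (p ^ K).-primitive_root z ->
  root (map_poly ratr P) z -> geom_poly p (p ^ K.-1) %| P.
Proof.
move=> pp K0 prim Pz; set G := geom_poly p (p ^ K.-1); set g := gcdp P G.
have p0 := prime_gt0 pp; have q0 : (0 < p ^ K.-1)%N by rewrite expn_gt0 p0.
have sizeG := size_geom_poly p0 q0.
have G0 : G != 0 by rewrite -size_poly_eq0 sizeG.
have gz : root (map_poly ratr g) z by rewrite gcdp_map root_gcd Pz root_geom_poly.
have [u gu] : exists u : algC, root (map_poly ratr g) u.
  apply/closed_rootP; rewrite size_map_poly.
  have : (1 < size (map_poly (ratr : rat -> F) g))%N.
    by apply: root_size_gt1 gz; rewrite map_poly_eq0 gcdp_eq0 negb_and G0 orbT.
  by rewrite size_map_poly; case: (size g) => [|[]].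
have primu : (p ^ K).-primitive_root u.
  by move: gu; rewrite gcdp_map root_gcd root_geom_poly // => /andP[].
have [Pu [mapPu _] dvdPu] := minCpolyP u.
have sizePu : size Pu = (p.-1 * p ^ K.-1).+1.
  rewrite -(size_map_poly (ratr : {rmorphism rat -> algC})) -mapPu.
  rewrite (minCpoly_cyclotomic primu).
  by rewrite size_cyclotomic totient_pfactor.
have le_Pu_g : (size Pu <= size g)%N.
  by rewrite dvdp_leq ?gcdp_eq0 ?negb_and ?G0 ?orbT // -dvdPu.
have le_g_G : (size g <= size G)%N by rewrite dvdp_leq ?dvdp_gcdr.
have gG : g %= G.
  by rewrite -dvdp_size_eqp ?dvdp_gcdr // eqn_leq le_g_G sizeG -sizePu.
by rewrite -(eqp_dvdl _ gG) dvdp_gcdl.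
Qed.

Lemma geom_poly_dvd_coef_shift p q (P : {poly rat}) : (0 < p)%N -> (0 < q)%N ->
  (size P <= p * q)%N -> geom_poly p q %| P ->
  forall m, (q <= m < p * q)%N -> P`_(m - q) = P`_m.
Proof.
move=> p0 q0 sizeP /dvdpP [Q defP] m /andP [qm mpq]; rewrite defP in sizeP *.
have sizeQ : (size Q <= q)%N.
  have [->|Q0] := eqVneq Q 0; first by rewrite size_poly0.
  have G0 : geom_poly p q != 0 by rewrite -size_poly_eq0 size_geom_poly.
  move: sizeP; rewrite size_mul // size_geom_poly // addnS /=.
  rewrite -[in X in (_ <= X)%N -> _](prednK p0) mulSn addnC.
  by move: (size Q) (p.-1 * q)%N => s t; lia.
have := congr1 (fun r : {poly rat} => (Q * r)`_m) (geom_poly_mul p q).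
rewrite /= mulrA !mulrBr !mulr1 !coefB !coefMXn ltnNge qm mpq /=.
by rewrite [Q`_m]nth_default ?(leq_trans sizeQ) // subrr => /eqP; rewrite subr_eq0 => /eqP.
Qed.

Lemma periodic_mod (T : Type) (f : nat -> T) q N : (0 < q)%N ->
  (forall m, (q <= m < N)%N -> f (m - q)%N = f m) ->
  forall m, (m < N)%N -> f m = f (m %% q)%N.
Proof.
move=> q0 shift m; elim/ltn_ind: m => m IH mN.
have [mq|qm] := ltnP m q; first by rewrite modn_small.
have lt_mq_m : (m - q < m)%N by rewrite ltn_subrL q0 (leq_trans q0 qm).
rewrite -shift ?qm // (IH _ lt_mq_m (ltn_trans lt_mq_m mN)).
by rewrite -{2}(subnK qm) modnDr.
Qed.

Lemma exists_other_eqn_mod q N m : (0 < q)%N -> (q + q <= N)%N -> (m < N)%N ->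
  exists m', [/\ m' < N, m' != m & m' = m %[mod q]]%N.
Proof.
move=> q0 qqN mN; have [mq|qm] := ltnP m q.
  exists (m + q)%N; split; last by rewrite modnDr.
  - by rewrite (leq_trans _ qqN) ?ltn_add2r.
  - by rewrite -{2}[m]addn0 eqn_add2l -lt0n.
exists (m %% q)%N; split; last by rewrite modn_mod.
- exact: leq_ltn_trans (leq_mod _ _) mN.
- by rewrite ltn_eqF // (leq_trans _ qm) ?ltn_mod.
Qed.

Lemma geom_poly_dvd_sparse n (e : 'I_n -> nat) (alpha : 'I_n -> int) p q :
  (1 < p)%N -> (0 < q)%N -> (forall i, e i < p * q)%N -> (forall i, alpha i != 0) ->
  geom_poly p q %| \sum_(i < n) (alpha i)%:~R *: 'X^(e i) ->
  forall i, exists2 j, j != i & (e j = e i %[mod q])%N.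
Proof.
move=> p1 q0 e_lt alpha0 dvdG i.
have q_pq : (q + q <= p * q)%N by rewrite addnn -mul2n leq_mul2r p1 orbT.
set P := \sum_(i < n) _ *: _ in dvdG.
have coefP m : P`_m = \sum_(j < n | m == e j) (alpha j)%:~R.
  rewrite coef_sum [RHS]big_mkcond; apply: eq_bigr => j _.
  by rewrite coefZ coefXn mulr_natr mulrb.
have sizeP : (size P <= p * q)%N.
  apply/leq_sizeP => m le_pq_m; rewrite coefP big_pred0 // => j.
  by rewrite gtn_eqF // (leq_trans (e_lt j)).
have periodicP := periodic_mod (f := fun m => P`_m) q0
  (geom_poly_dvd_coef_shift (ltnW p1) q0 sizeP dvdG).
case: (boolP [exists (j | j != i), e j == e i %[mod q]]).
  by move=> /exists_inP [j ji /eqP eji]; exists j.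
(* Otherwise P has coefficient alpha_i at e_i but 0 at another representative
   e' of the class of e_i modulo q, contradicting periodicity. *)
move=> /exists_inPn no_j; exfalso.
have [e' [e'_lt e'_neq e'_mod]] := exists_other_eqn_mod q0 q_pq (e_lt i).
have coef_ei : P`_(e i) = (alpha i)%:~R.
  rewrite coefP (big_pred1 i) // => j.
  have [-> | ji] := eqVneq j i; first by rewrite /= !eqxx.
  by rewrite /= (negbTE ji); apply: contraNF (no_j j ji) => /eqP ->.
have coef_e' : P`_e' = 0.
  rewrite coefP big_pred0 // => j /=.
  have [-> | ji] := eqVneq j i; first exact: negbTE.
  by apply: contraNF (no_j j ji) => /eqP <-; apply/eqP.
move: (alpha0 i); rewrite -(intr_eq0 rat) -coef_ei periodicP // -e'_mod -periodicP //.
by rewrite coef_e' eqxx.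
Qed.

(** * p-adic absolute values and fractional parts *)

Section PAdic.

Variable p : nat.
Hypothesis pp : prime p.

Lemma ppowD m n : ppow p (m + n) = ppow p m * ppow p n.
Proof. by rewrite /ppow expnD PoszM. Qed.

Lemma ppow_neq0 n : ppow p n != 0.
Proof. by rewrite /ppow eqz_nat expn_eq0 negb_and -lt0n prime_gt0. Qed.

Lemma dvdz_ppow m n : (m <= n)%N -> (ppow p m %| ppow p n)%Z.
Proof. by move=> le_mn; rewrite dvdzE /= dvdn_exp2l. Qed.

Lemma dvdz_ppowE m z : (ppow p m %| z)%Z = (p ^ m %| `|z|)%N.
Proof. by rewrite dvdzE. Qed.

Lemma zp_congr (a : Defs.Zp p) m n : (m <= n)%N -> (ppow p m %| a n - a m)%Z.
Proof.
elim: n => [|n IH]; first by rewrite leqn0 => /eqP ->; rewrite subrr dvdz0.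
rewrite leq_eqVlt => /orP [/eqP ->|]; first by rewrite subrr dvdz0.
rewrite ltnS => le_mn; rewrite -(subrKA (a n)) rpredD ?IH //.
by apply: dvdz_trans (dvdz_ppow le_mn) _; rewrite -eqz_mod_dvd zcompat.
Qed.

Lemma zp_dvd_shift (a : Defs.Zp p) k m n : (k <= m)%N -> (k <= n)%N ->
  (ppow p k %| a m)%Z = (ppow p k %| a n)%Z.
Proof.
move=> km kn; rewrite -[a m](subrK (a k)) (rpredDl _ (zp_congr a km)).
by rewrite -[a n](subrK (a k)) (rpredDl _ (zp_congr a kn)).
Qed.

Lemma notdiv_gt0 (a : Defs.Zp p) M : notdiv a M -> (0 < M)%N.
Proof. by case: M => //; rewrite /notdiv /ppow expn0 dvd1z. Qed.

Lemma zp_logn (a : Defs.Zp p) M L : notdiv a M ->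
  (forall m, (m < M)%N -> (ppow p m %| a m)%Z) -> (M <= L)%N ->
  (0 < `|a L|)%N /\ logn p `|a L| = M.-1.
Proof.
move=> aM minM ML; have M0 := notdiv_gt0 aM.
have dvd_pred : (p ^ M.-1 %| `|a L|)%N.
  rewrite -dvdz_ppowE -(zp_dvd_shift _ (leqnn _)) ?minM ?prednK //.
  by rewrite (leq_trans (leq_pred M)).
have ndvd : ~~ (p ^ M %| `|a L|)%N by rewrite -dvdz_ppowE -(zp_dvd_shift _ (leqnn _)).
have aL0 : (0 < `|a L|)%N by rewrite lt0n; apply: contraNneq ndvd => ->.
split=> //; move: dvd_pred ndvd; rewrite !pfactor_dvdn //; lia.
Qed.

Lemma qp_eq0P (x : Qp p) : qp_eq x (qp0 p) <-> forall m, (ppow p m %| qa x m)%Z.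
Proof.
by split=> x0 m; have := x0 m; rewrite eqz_mod_dvd /= mulr0 subr0 /ppow mul1r.
Qed.

Lemma qp_abs0 (x : Qp p) : qp_eq x (qp0 p) -> qp_abs x = 0.
Proof.
move/qp_eq0P => x0; rewrite /qp_abs; case: excluded_middle_informative => // h.
by exfalso; case: h => m; rewrite /notdiv x0.
Qed.

Lemma qp_abs_min (x : Qp p) M : notdiv (qa x) M ->
  (forall m, (m < M)%N -> (ppow p m %| qa x m)%Z) ->
  qp_abs x = (p%:R : R) ^+ qk x / p%:R ^+ M.-1.
Proof.
move=> xM minM; rewrite /qp_abs.
case: excluded_middle_informative => [h|[]]; last by exists M.
case: ex_minnP => M' xM' minM'; congr (_ / _ ^+ _.-1).
apply/eqP; rewrite eqn_leq minM' // leqNgt; apply/negP => lt_M'M.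
by move: xM'; rewrite /notdiv minM.
Qed.

Lemma qp_neq0_minn (x : Qp p) : ~ qp_eq x (qp0 p) ->
  exists2 M, notdiv (qa x) M & forall m, (m < M)%N -> (ppow p m %| qa x m)%Z.
Proof.
move=> x0; have [m xm] : exists m, notdiv (qa x) m.
  apply: NNPP => nx; apply/x0/qp_eq0P => m; apply/negPn/negP => xm.
  by apply: nx; exists m.
case: (ex_minnP (ex_intro _ m xm)) => M xM minM; exists M => // k lt_kM.
by apply/negPn/negP => /minM; rewrite leqNgt lt_kM.
Qed.

Lemma qp_abs_logn (x : Qp p) L : (0 < `|qa x L|)%N -> (logn p `|qa x L| < L)%N ->
  qp_abs x = (p%:R : R) ^+ qk x / p%:R ^+ logn p `|qa x L|.
Proof.
set v := logn p _ => xL0 vL; rewrite (@qp_abs_min _ v.+1) //.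
  by rewrite /notdiv (zp_dvd_shift _ (leqnn _) vL) dvdz_ppowE pfactor_dvdn // ltnn.
move=> m lt_mv; rewrite (zp_dvd_shift _ (leqnn m) (ltnW (leq_trans lt_mv vL))).
by rewrite dvdz_ppowE pfactor_dvdn.
Qed.

Lemma qp_abs_mul (x d : Qp p) : qp_abs (qp_mul x d) = qp_abs x * qp_abs d.
Proof.
have [x0|/qp_neq0_minn [Mx xMx minMx]] := classic (qp_eq x (qp0 p)).
  rewrite (qp_abs0 x0) mul0r qp_abs0 //; apply/qp_eq0P => m.
  by rewrite /= dvdz_mulr // (proj1 (qp_eq0P _) x0).
have [d0|/qp_neq0_minn [Md dMd minMd]] := classic (qp_eq d (qp0 p)).
  rewrite (qp_abs0 d0) mulr0 qp_abs0 //; apply/qp_eq0P => m.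
  by rewrite /= dvdz_mull // (proj1 (qp_eq0P _) d0).
have [xL0 logx] := zp_logn xMx minMx (leq_addr Md Mx).
have [dL0 logd] := zp_logn dMd minMd (leq_addl Mx Md).
have [Mx0 Md0] := (notdiv_gt0 xMx, notdiv_gt0 dMd).
rewrite (qp_abs_min xMx minMx) (qp_abs_min dMd minMd) (@qp_abs_logn _ (Mx + Md)) /=.
- by rewrite abszM lognM // logx logd !exprD mulf_div.
- by rewrite abszM muln_gt0 xL0.
- by rewrite abszM lognM // logx logd; lia.
Qed.

Lemma qp_abs_gt0 (x : Qp p) : ~ qp_eq x (qp0 p) -> 0 < qp_abs x.
Proof.
case/qp_neq0_minn => M xM minM; rewrite (qp_abs_min xM minM).
by rewrite divr_gt0 ?exprn_gt0 ?ltr0n ?prime_gt0.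
Qed.

Lemma qp_abs_dvd_le (z : Qp p) S :
  (forall L, (L < S)%N -> (ppow p L %| qa z L)%Z) ->
  qp_abs z <= (p%:R : R) ^+ (qk z).+1 / p%:R ^+ S.
Proof.
have p_gt0 : 0 < (p%:R : R) by rewrite ltr0n prime_gt0.
have [z0|/qp_neq0_minn [M zM minM] dvdS] := classic (qp_eq z (qp0 p)).
  by rewrite qp_abs0 // => _; rewrite divr_ge0 ?exprn_ge0 ?ltW.
have le_SM : (S <= M)%N by rewrite leqNgt; apply: contraNN zM => /dvdS.
have M0 := notdiv_gt0 zM.
rewrite (qp_abs_min zM minM) ler_pdivrMr ?exprn_gt0 // mulrAC ler_pdivlMr ?exprn_gt0 //.
by rewrite -!exprD ler_weXn2l ?ler1n ?prime_gt0 //; lia.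
Qed.

(* [qp_frac y] is [frac_num y / p ^ qk y], and [frac_index K y] is the numerator
   of the same fraction over [p ^ K]. *)
Definition frac_num (y : Qp p) : int := (qa y (qk y) %% ppow p (qk y))%Z.

Definition frac_index (K : nat) (y : Qp p) : nat := (`|frac_num y| * p ^ (K - qk y))%N.

Lemma frac_num_ge0 (y : Qp p) : 0 <= frac_num y.
Proof. exact/modz_ge0/ppow_neq0. Qed.

Lemma frac_num_congr (y : Qp p) n : (qk y <= n)%N ->
  (ppow p (qk y) %| qa y n - frac_num y)%Z.
Proof.
move=> kn; rewrite -(subrKA (qa y (qk y))) rpredD ?zp_congr //.
by rewrite {1}(divz_eq (qa y (qk y)) (ppow p (qk y))) addrK dvdz_mull.
Qed.

Lemma frac_indexE K (y : Qp p) : (frac_index K y)%:Z = frac_num y * ppow p (K - qk y).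
Proof. by rewrite /frac_index PoszM gez0_abs ?frac_num_ge0. Qed.

Lemma frac_index_lt K (y : Qp p) : (qk y <= K)%N -> (frac_index K y < p ^ K)%N.
Proof.
move=> kK; rewrite /frac_index -{2}(subnKC kK) expnD ltn_pmul2r ?expn_gt0 ?prime_gt0 //.
rewrite -ltz_nat gez0_abs ?frac_num_ge0 // ltz_pmod //.
by rewrite /ppow ltz_nat expn_gt0 prime_gt0.
Qed.

Lemma qp_frac_index K (y : Qp p) : (qk y <= K)%N ->
  qp_frac y = (frac_index K y)%:R / (p%:R : R) ^+ K.
Proof.
move=> kK; rewrite -[(frac_index K y)%:R]/((frac_index K y)%:Z%:~R) frac_indexE.
rewrite /qp_frac -/(frac_num y) rmorphM /= /ppow -pmulrn natrX RdivE.
have -> : (p%:R : R) ^+ K = p%:R ^+ qk y * p%:R ^+ (K - qk y) by rewrite -exprD subnKC.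
have p0 : (p%:R : R) != 0 by rewrite pnatr_eq0 -lt0n prime_gt0.
by field; rewrite !expf_neq0.
Qed.

Lemma frac_index_congr_dvd (y1 y2 : Qp p) K : (qk y1 + qk y2 <= K)%N ->
  (frac_index K y1 = frac_index K y2 %[mod p ^ K.-1])%N ->
  (ppow p (qk y1 + qk y2).-1 %|
     ppow p (qk y2) * frac_num y1 - ppow p (qk y1) * frac_num y2)%Z.
Proof.
set k := (qk y1 + qk y2)%N; set W := _ - _ => kK congr_y.
have [-> | k_gt0] := posnP k; first by rewrite /ppow dvd1z.
have diffE : (frac_index K y1)%:Z - (frac_index K y2)%:Z = ppow p (K - k) * W.
  rewrite !frac_indexE /W (_ : K - qk y1 = K - k + qk y2)%N; last by rewrite /k; lia.
  by rewrite (_ : K - qk y2 = K - k + qk y1)%N ?ppowD; [ring | rewrite /k; lia].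
have : (ppow p K.-1 %| ppow p (K - k) * W)%Z.
  by rewrite -diffE -eqz_mod_dvd /ppow !modz_nat congr_y.
rewrite (_ : K.-1 = K - k + k.-1)%N ?ppowD ?dvdz_mul2l ?ppow_neq0 //; lia.
Qed.

(* The hypothesis says that [xi a] and [xi b] have fractional parts congruent
   modulo [1 / p]. *)
Lemma qp_abs_mul_sub_le (xi a b : Qp p) K :
  (qk xi + qk a + (qk xi + qk b) <= K)%N ->
  (frac_index K (qp_mul xi a) = frac_index K (qp_mul xi b) %[mod p ^ K.-1])%N ->
  qp_abs xi * qp_abs (qp_sub a b) <= p%:R.
Proof.
move=> kK congr_ab; set S := (qk xi + (qk a + qk b))%N.
rewrite -qp_abs_mul (le_trans (@qp_abs_dvd_le _ S _)) //; last first.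
  by rewrite /= exprS -mulrA divff ?mulr1 // expf_neq0 // pnatr_eq0 -lt0n prime_gt0.
move=> L lt_LS; set Z := qa (qp_mul xi (qp_sub a b)).
set ya := qp_mul xi a; set yb := qp_mul xi b; set n := (qk ya + qk yb)%N.
have ZnE : ppow p (qk xi) * Z n =
    (qa ya n - frac_num ya) * ppow p (qk yb) - (qa yb n - frac_num yb) * ppow p (qk ya)
    + (ppow p (qk yb) * frac_num ya - ppow p (qk ya) * frac_num yb).
  by rewrite /Z /= !ppowD; ring.
have dvd_term (y y' : Qp p) m : (qk y + qk y' = m)%N ->
    (ppow p m.-1 %| (qa y m - frac_num y) * ppow p (qk y'))%Z.
  move=> <-; apply: dvdz_trans (dvdz_ppow (leq_pred _)) _.
  by rewrite ppowD dvdz_mul ?frac_num_congr ?leq_addr.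
have : (ppow p (qk xi) * ppow p S.-1 %| ppow p (qk xi) * Z n)%Z.
  rewrite -ppowD (_ : qk xi + S.-1 = n.-1)%N; last by rewrite /n /S /=; lia.
  rewrite ZnE rpredD ?(frac_index_congr_dvd (y1 := ya) (y2 := yb) kK congr_ab) //.
  by rewrite rpredB ?dvd_term // /n addnC.
rewrite dvdz_mul2l ?ppow_neq0 // => dvdZn.
rewrite (zp_dvd_shift _ (leqnn L) (_ : L <= n)%N); last by rewrite /n /S /=; lia.
by apply: dvdz_trans dvdZn; apply: dvdz_ppow; lia.
Qed.

End PAdic.

(** * Characters as powers of a root of unity *)

Lemma IZR2 : IZR 2 = 2 :> R.
Proof. by rewrite RealsE. Qed.

Definition cis (t : R) : R[i] := Complex (cos t) (sin t).

Lemma cis_exprn t e : cis t ^+ e = cis (e%:R * t).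
Proof.
rewrite RmultE; elim: e => [|e IH]; first by rewrite expr0 mulr0n mul0r /cis cos_0 sin_0.
rewrite exprSr IH /cis /= mulrSr mulrDl mul1r -RplusE cos_plus sin_plus !RealsE.
by congr Complex; rewrite addrC.
Qed.

Lemma cis_2PI : cis (2 * PI) = 1.
Proof. by rewrite /cis cos_2PI sin_2PI. Qed.

Lemma cos_lt1 (x : R) : 0 < x -> x <= PI -> cos x < 1.
Proof.
move=> x0 xPI; have PI0 := lt_le_trans x0 xPI.
rewrite -[X in _ < X]cos_0; apply/RltP.
apply: cos_decreasing_1.
- exact: Rle_refl.
- exact/RleP/ltW.
- exact/RleP/ltW.
- exact/RleP.
- exact/RltP.
Qed.

Lemma prim_root_cis p K : prime p -> (0 < K)%N ->
  (p ^ K).-primitive_root (cis (2 * PI / (p ^ K)%:R)).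
Proof.
move=> pp K0; have p0 : 0 < (p%:R : R) by rewrite ltr0n prime_gt0.
have pn0 m : ((p ^ m)%:R : R) != 0 by rewrite natrX expf_neq0 ?lt0r_neq0.
have PI0 : 0 < PI by apply/RltP; exact: PI_RGT_0.
apply: prim_root_pfactor => //; rewrite cis_exprn !RmultE RdivE IZR2.
  by rewrite mulrC divfK ?cis_2PI.
have -> : (p ^ K.-1)%:R * (2 * PI / (p ^ K)%:R) = 2 * PI / p%:R :> R.
  by rewrite -{2}(prednK K0) expnS natrM; field; rewrite pn0 lt0r_neq0.
apply/eqP => -[] /eqP; rewrite lt_eqF // cos_lt1 //.
  by rewrite divr_gt0 // mulr_gt0 // ltr0n.
by rewrite ler_pdivrMr // mulrC ler_pM2l // ler_nat prime_gt1.
Qed.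

Lemma sum_Complex (I : Type) (r : seq I) (P : pred I) (f g : I -> R) :
  \sum_(i <- r | P i) Complex (f i) (g i) =
  Complex (\sum_(i <- r | P i) f i) (\sum_(i <- r | P i) g i).
Proof. by apply: (big_rec3 (fun x y z => x = Complex y z)) => // i x y z _ ->. Qed.

Lemma intr_mulC (a : int) (c s : R) :
  (a%:~R : R[i]) * Complex c s = Complex (a%:~R * c) (a%:~R * s).
Proof.
rewrite -(rmorph_int (real_complex R)) /=.
rewrite -[LHS]/(Complex (_ * c - 0 * s) (_ * s + 0 * c)).
by rewrite !mul0r subr0 addr0.
Qed.

Lemma chi_cis p (y : Qp p) K : prime p -> (qk y <= K)%N ->
  Complex (chi y).1 (chi y).2 = cis (2 * PI / (p ^ K)%:R) ^+ frac_index K y.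
Proof.
move=> pp kK; rewrite cis_exprn /chi /= (qp_frac_index pp kK) !RmultE !RdivE.
by rewrite natrX mulrCA.
Qed.

Lemma nu_hat_root p n (x : 'I_n -> Qp p) (alpha : 'I_n -> int) (xi : Qp p) K :
  prime p -> (forall i, qk (qp_mul xi (x i)) <= K)%N -> nu_hat x alpha xi = (0, 0) ->
  root (map_poly ratr (\sum_(i < n) (alpha i)%:~R *: 'X^(frac_index K (qp_mul xi (x i)))))
       (cis (2 * PI / (p ^ K)%:R)).
Proof.
move=> pp kK [re im]; rewrite /root rmorph_sum horner_sum.
under eq_bigr => i _ do rewrite /= map_polyZ map_polyXn hornerZ hornerXn rmorph_int
  -(chi_cis pp (kK i)) intr_mulC.
rewrite sum_Complex re; apply/eqP; congr Complex.
apply/eqP; rewrite -oppr_eq0 -sumrN; apply/eqP; rewrite -[RHS]im.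
by apply: eq_bigr => i _; rewrite mulrN.
Qed.

Theorem mainTheorem6 (p : nat) (hp : prime p)
  (n : nat) (x : 'I_n -> Qp p) (alpha : 'I_n -> int) (xi : Qp p) :
  (0 < n)%N ->
  (forall i j : 'I_n, i != j -> ~ qp_eq (x i) (x j)) ->
  (forall i, alpha i != 0) ->
  ~ qp_eq xi (qp0 p) ->
  nu_hat x alpha xi = (0, 0) ->
  forall i : 'I_n, exists j : 'I_n,
    ~ qp_eq (x j) (x i) /\
    qp_abs (qp_sub (x i) (x j)) <= (p%:R : R) / qp_abs xi.
Proof.
(* [0 < n] is implied by the existence of [i]. *)
move=> _ x_inj alpha0 xi0 nu0 i.
have [M kM] : exists M, forall j, (qk (x j) <= M)%N.
  by exists (\max_(j < n) qk (x j))%N => j; apply: (leq_bigmax (F := fun j => qk (x j))).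
pose K := (qk xi + M + (qk xi + M)).+1.
have kK j j' : (qk xi + qk (x j) + (qk xi + qk (x j')) <= K)%N.
  by have := kM j; have := kM j'; rewrite /K; lia.
have K0 : (0 < K)%N by [].
have [q0 pq] : (0 < p ^ K.-1)%N /\ (p * p ^ K.-1 = p ^ K)%N.
  by rewrite -expnS prednK // expn_gt0 prime_gt0.
have kxK j : (qk (qp_mul xi (x j)) <= K)%N by have := kK j j; rewrite /=; lia.
have e_lt j : (frac_index K (qp_mul xi (x j)) < p * p ^ K.-1)%N.
  by rewrite pq frac_index_lt.
have root_e := nu_hat_root hp kxK nu0.
have dvdG := prim_root_geom_poly_dvd hp K0 (prim_root_cis hp K0) root_e.
have [j ji congr_ij] := geom_poly_dvd_sparse (prime_gt1 hp) q0 e_lt alpha0 dvdG i.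
exists j; split; first exact: x_inj.
rewrite ler_pdivlMr ?qp_abs_gt0 // mulrC.
by apply: (qp_abs_mul_sub_le hp (kK i j)); rewrite congr_ij.
Qed.
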